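(* Let $\lambda$ be a Salem number and $n$ a positive integer. Then the positive real number $\sqrt[n]{\lambda}$ has an algebraic conjugate (over $\mathbb{Q}$) of modulus $1$.
   Context: A Salem number is a real algebraic integer $\lambda>1$ all of whose other conjugates over $\mathbb{Q}$ have modulus at most $1$, with at least one conjugate of modulus exactly $1$. *)

From mathcomp Require Import all_boot all_order all_algebra all_field.
Set Implicit Arguments. Unset Strict Implicit. Unset Printing Implicit Defensive.
Import Order.TTheory GRing.Theory Num.Theory.
Local Open Scope ring_scope.

(* Algebraic numbers are modelled in algC (algebraic closure of Q inside C).
   [alg_conjugate x y] : y is an algebraic conjugate of x over Q, i.e. a root
   of the minimal polynomial of x over Q. *)
Definition alg_conjugate (x y : algC) : bool := root (minCpoly x) y.

Definition salem (l : algC) : Prop :=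
  [/\ l \is Creal, 1 < l, l \in Aint,
      (forall y, alg_conjugate l y -> y != l -> `|y| <= 1)
    & exists y, alg_conjugate l y /\ `|y| = 1].

(* Every conjugate y of an algebraic number x is nu x for some automorphism nu
   of algC: embed a splitting field of the minimal polynomial of x in algC,
   extend the Q-isomorphism Q(x) -> Q(y) to that splitting field, and then to
   algC.  Applying this to l and a conjugate of modulus 1, nu r is a conjugate
   of r with |nu r| ^+ n = |nu l| = 1, hence |nu r| = 1. *)

From HB Require Import structures.
From mathcomp Require Import all_boot all_order all_algebra all_field.
Set Implicit Arguments.
Unset Strict Implicit.
Unset Printing Implicit Defensive.

Import Order.TTheory GRing.Theory Num.Theory.
Local Open Scope ring_scope.

Lemma splitting_kHom_root (F : fieldType) (L : fieldExtType F) (p : {poly L})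
    (x y : L) :
  p \is a polyOver 1%VS -> splittingFieldFor 1 p fullv ->
  root (minPoly 1 x) y -> {g | kHom 1 fullv g & g x = y}.
Proof.
move=> Fp splitp xy.
pose f := kHomExtend 1 \1 x y.
have xy1 : root (map_poly \1%VF (minPoly 1 x)) y by rewrite lfun1_poly.
have homf : kHom 1 <<1; x>> f by apply: kHomExtendP; rewrite ?kHom1.
have splitpx : splittingFieldFor <<1; x>> p fullv.
  by apply: splittingFieldForS splitp; rewrite ?sub1v ?subvf.
have [g homg Dg] := kHom_extends (sub1v _) homf Fp splitpx.
by exists g; rewrite // -Dg ?memv_adjoin // (kHomExtend_val (kHom1 1 1)).
Qed.

Section NumberFieldEmbedding.

Variables (Qn : fieldExtType rat) (QnC : {rmorphism Qn -> algC}).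

Lemma map_poly_in_alg_ratr (q : {poly rat}) :
  map_poly QnC (map_poly (in_alg Qn) q) = map_poly ratr q.
Proof.
rewrite -map_poly_comp; apply: eq_map_poly => a.
by rewrite /= rmorphZ_num rmorph1 mulr1.
Qed.

Lemma minCpoly_dvd_minPoly (x : Qn) :
  minCpoly (QnC x) %| map_poly QnC (minPoly 1 x).
Proof.
have /polyOver1P[q1 Dq1] := minPolyOver 1 x.
have [q [-> _] min_q] := minCpolyP (QnC x).
rewrite Dq1 map_poly_in_alg_ratr dvdp_map -min_q -map_poly_in_alg_ratr -Dq1.
by rewrite fmorph_root root_minPoly.
Qed.

Lemma num_field_root_minCpoly_aut (p : {poly Qn}) (x y : Qn) :
    p \is a polyOver 1%VS -> splittingFieldFor 1 p fullv ->
    root (minCpoly (QnC x)) (QnC y) ->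
  {nu : {rmorphism algC -> algC} | nu (QnC x) = QnC y}.
Proof.
move=> Fp splitp xy.
have /(splitting_kHom_root Fp splitp)[g homg gx] : root (minPoly 1 x) y.
  by rewrite -(fmorph_root QnC); apply: root_dvdp (minCpoly_dvd_minPoly x) xy.
pose gM := GRing.isMonoidMorphism.Build _ _ g (kHom_monoid_morphism homg).
pose gRM : {rmorphism Qn -> Qn} := HB.pack (fun_of_lfun g) gM.
have [nu Dnu] := extend_algC_subfield_aut QnC gRM.
by exists nu; rewrite -Dnu /= gx.
Qed.

End NumberFieldEmbedding.

Lemma root_minCpoly_aut (x y : algC) :
  root (minCpoly x) y -> exists nu : {rmorphism algC -> algC}, nu x = y.
Proof.
move=> xy; have [rs Drs] := closed_field_poly_normal (minCpoly x).
rewrite (monicP (minCpoly_monic x)) scale1r in Drs.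
have [Qn [QnC [s1 Ds1 genQn]]] := num_field_exists rs.
have inQn z : root (minCpoly x) z -> exists2 z', z' \in s1 & QnC z' = z.
  by rewrite Drs root_prod_XsubC -Ds1 => /mapP[z' ? ->]; exists z'.
have [q [Dq _] _] := minCpolyP x.
pose p := map_poly (in_alg Qn) q.
have Fp : p \is a polyOver 1%VS by apply/polyOver1P; exists q.
have splitp : splittingFieldFor 1 p fullv.
  exists s1; last by rewrite genQn.
  suff -> : p = \prod_(z <- s1) ('X - z%:P) by apply: eqpxx.
  apply: (map_poly_inj QnC); rewrite map_poly_in_alg_ratr -Dq Drs -Ds1 big_map.
  rewrite rmorph_prod; apply: eq_bigr => z _.
  by rewrite rmorphB /= map_polyX map_polyC.
have [[x' _ Dx] [y' _ Dy]] := (inQn x (root_minCpoly x), inQn y xy).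
rewrite -Dx -Dy in xy *.
by have [nu Dnu] := num_field_root_minCpoly_aut Fp splitp xy; exists nu.
Qed.

Lemma unimodular_conjugate_expr (r y : algC) (n : nat) :
    (0 < n)%N -> alg_conjugate (r ^+ n) y -> `|y| = 1 ->
  exists z : algC, alg_conjugate r z /\ `|z| = 1.
Proof.
move=> n_gt0 rny y1; have [nu Dnu] := root_minCpoly_aut rny.
exists (nu r); split.
  by rewrite /alg_conjugate -(minCpoly_aut nu r) root_minCpoly.
have nu_rn : `|nu r| ^+ n = 1 by rewrite -normrX -rmorphXn Dnu y1.
by apply/eqP; rewrite -(pexpr_eq1 n_gt0) ?normr_ge0 // nu_rn.
Qed.

Theorem mainTheorem3 (l : algC) (n : nat) :
  salem l -> (0 < n)%N ->
  forall r : algC, r \is Creal -> 0 < r -> r ^+ n = l ->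
  exists z : algC, alg_conjugate r z /\ `|z| = 1.
Proof.
move=> [_ _ _ _ [y [ly y1]]] n_gt0 r _ _ rn.
by apply: unimodular_conjugate_expr n_gt0 _ y1; rewrite rn.
Qed.
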